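(* If $V$ is an $\Re$-module containing a vector $v$ with $Bv=\theta_0^*v$, $(B-\theta_1^* )(A-\theta_0)v=\varphi_1v$, $\alpha v=\zeta v$, $\beta v=\zeta^*v$, $\delta v=\eta v$, then there exists a unique $\Re$-module homomorphism $M_\nu(a,b,c)\to V$ sending $m_0$ to $v$.
   Context: $\mathbb F$ is algebraically closed with $\operatorname{char}\mathbb F\ne2$. The Racah algebra $\Re$ is the unital associative $\mathbb F$-algebra with generators $A,B,C,D$ and relations $[A,B]=[B,C]=[C,A]=2D$ together with the requirement that each of $\alpha:=[A,D]+AC-BA$, $\beta:=[B,D]+BA-CB$, $\gamma:=[C,D]+CB-AC$ is central in $\Re$; $\delta:=A+B+C$. For $a,b,c,\nu\in\mathbb F$ and $i\in\mathbb Z$: $\theta_i=(a+\tfrac\nu2-i)(a+\tfrac\nu2-i+1)$, $\theta_i^*=(b+\tfrac\nu2-i)(b+\tfrac\nu2-i+1)$, $\varphi_i=i(i-\nu-1)(a+b+c+\tfrac\nu2-i+2)(a+b-c+\tfrac\nu2-i+1)$, $\zeta=(c-b)(c+b+1)(a-\tfrac\nu2)(a+\tfrac\nu2+1)$, $\zeta^*=(a-c)(a+c+1)(b-\tfrac\nu2)(b+\tfrac\nu2+1)$, $\eta=\tfrac\nu2(\tfrac\nu2+1)+a(a+1)+b(b+1)+c(c+1)$. $M_\nu(a,b,c)$ is the $\Re$-module with $\mathbb F$-basis $\{m_i\}_{i\ge0}$ such that $Am_i=\theta_im_i+m_{i+1}$ ($i\ge0$), $Bm_0=\theta_0^*m_0$,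 $Bm_i=\theta_i^*m_i+\varphi_im_{i-1}$ ($i\ge1$), and $\alpha,\beta,\delta$ act as $\zeta,\zeta^*,\eta$. *)

From HB Require Import structures.
From mathcomp Require Import all_boot all_order all_algebra.
Set Implicit Arguments. Unset Strict Implicit. Unset Printing Implicit Defensive.
Import GRing.Theory.
Local Open Scope ring_scope.

Section Racah.
Variable F : fieldType.

Definition rtheta (a nu : F) (i : nat) : F :=
  (a + nu / 2%:R - i%:R) * (a + nu / 2%:R - i%:R + 1).
(* theta_i = rtheta a nu i,  theta*_i = rtheta b nu i *)
Definition rphi (a b c nu : F) (i : nat) : F :=
  i%:R * (i%:R - nu - 1) * (a + b + c + nu / 2%:R - i%:R + 2%:R)
  * (a + b - c + nu / 2%:R - i%:R + 1).
Definition rzeta (a b c nu : F) : F :=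
  (c - b) * (c + b + 1) * (a - nu / 2%:R) * (a + nu / 2%:R + 1).
Definition rzetas (a b c nu : F) : F :=
  (a - c) * (a + c + 1) * (b - nu / 2%:R) * (b + nu / 2%:R + 1).
Definition reta (a b c nu : F) : F :=
  nu / 2%:R * (nu / 2%:R + 1) + a * (a + 1) + b * (b + 1) + c * (c + 1).

Section Ops.
Variable V : lmodType F.
Variables (A B C D : V -> V).

Definition comm_op (X Y : V -> V) : V -> V := fun x => X (Y x) - Y (X x).
Definition alpha_op : V -> V := fun x => comm_op A D x + A (C x) - B (A x).
Definition beta_op  : V -> V := fun x => comm_op B D x + B (A x) - C (B x).
Definition gamma_op : V -> V := fun x => comm_op C D x + C (B x) - A (C x).
Definition delta_op : V -> V := fun x => A x + B x + C x.

Definition central_op (X : V -> V) : Prop :=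
  forall x, [/\ X (A x) = A (X x), X (B x) = B (X x),
                X (C x) = C (X x) & X (D x) = D (X x)].

Definition racah_module : Prop :=
  [/\ [/\ linear A, linear B, linear C & linear D],
      [/\ (forall x, comm_op A B x = 2%:R *: D x),
          (forall x, comm_op B C x = 2%:R *: D x) &
          (forall x, comm_op C A x = 2%:R *: D x)] &
      [/\ central_op alpha_op, central_op beta_op & central_op gamma_op]].
End Ops.

Definition racah_hom (U W : lmodType F)
  (A B C D : U -> U) (A' B' C' D' : W -> W) (f : U -> W) : Prop :=
  [/\ linear f, (forall x, f (A x) = A' (f x)), (forall x, f (B x) = B' (f x)),
      (forall x, f (C x) = C' (f x)) & (forall x, f (D x) = D' (f x))].

(* ---- The module M_nu(a,b,c): carrier {poly F}, with m_i = 'X^i. ---- *)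
Section M.
Variables (a b c nu : F).

Definition MA (p : {poly F}) : {poly F} :=
  \poly_(i < (size p).+1)
     (rtheta a nu i * p`_i + (if i is j.+1 then p`_j else 0)).
Definition MB (p : {poly F}) : {poly F} :=
  \poly_(i < size p) (rtheta b nu i * p`_i + rphi a b c nu i.+1 * p`_i.+1).
(* delta acts as eta, hence C = eta - A - B *)
Definition MC (p : {poly F}) : {poly F} := reta a b c nu *: p - MA p - MB p.
(* [A,B] = 2D, hence D = [A,B]/2 *)
Definition MD (p : {poly F}) : {poly F} := (2%:R)^-1 *: (MA (MB p) - MB (MA p)).
End M.

End Racah.

(* Put v_0 = v and v_(i+1) = (A - theta_i) v_i, so that A acts on the v_i as on
   the m_i by construction.  Operators commuting with A (alpha, and delta thanks
   to [A,B] = [C,A] = 2D) act on every v_i by the scalar by which they act on v.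
   Eliminating C = delta - A - B and D = [A,B]/2 from the definition of alpha
   gives the Askey-Wilson type relation
     A^2 B - 2 A B A + B A^2 = 2 alpha - 2 A delta + 2 A^2 + 2 A B + 2 B A,
   whose only unknown term at v_i is B v_(i+2); so B v_i = theta*_i v_i + phi_i v_(i-1)
   follows by induction from the two initial conditions on v.  Hence m_i |-> v_i
   is a homomorphism (in M_nu, C and D are also determined by A, B and delta), and
   it is unique because M_nu is generated by m_0 as an A-module. *)
From HB Require Import structures.
From mathcomp Require Import all_boot all_order all_algebra.
From mathcomp Require Import ring.
Import GRing.Theory.
Local Open Scope ring_scope.
Set Implicit Arguments. Unset Strict Implicit. Unset Printing Implicit Defensive.

Section LinearMaps.
Variable F : fieldType.

Section OneMap.
Variables (U W : lmodType F) (L : U -> W) (hL : linear L).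

Lemma linD u w : L (u + w) = L u + L w.
Proof. by have := hL 1 u w; rewrite !scale1r. Qed.

Lemma lin0 : L 0 = 0.
Proof. by have := hL (-1) 0 0; rewrite !scaleN1r oppr0 addr0 addNr. Qed.

Lemma linZ k u : L (k *: u) = k *: L u.
Proof. by have := hL k u 0; rewrite !addr0 lin0 addr0. Qed.

Lemma linN u : L (- u) = - L u.
Proof. by rewrite -scaleN1r linZ scaleN1r. Qed.

Lemma linB u w : L (u - w) = L u - L w.
Proof. by rewrite linD linN. Qed.

End OneMap.

Section Combinators.
Variables U W Y : lmodType F.

Lemma lin_comp (X : W -> Y) (Z : U -> W) :
  linear X -> linear Z -> linear (fun u => X (Z u)).
Proof. by move=> hX hZ k u w; rewrite hZ hX. Qed.

Lemma lin_add (X Z : U -> W) : linear X -> linear Z -> linear (fun u => X u + Z u).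
Proof. by move=> hX hZ k u w; rewrite hX hZ scalerDr addrACA. Qed.

Lemma lin_sub (X Z : U -> W) : linear X -> linear Z -> linear (fun u => X u - Z u).
Proof. by move=> hX hZ k u w; rewrite hX hZ scalerBr opprD addrACA. Qed.

Lemma lin_scale e (X : U -> W) : linear X -> linear (fun u => e *: X u).
Proof. by move=> hX k u w; rewrite hX scalerDr !scalerA mulrC. Qed.

End Combinators.

Section PolyDomain.
Variable W : lmodType F.

Lemma lin_expand (L : {poly F} -> W) (hL : linear L) p :
  L p = \sum_(i < size p) p`_i *: L 'X^i.
Proof.
rewrite -{1}(coefK p) poly_def.
elim: (size p) => [|n IH]; first by rewrite !big_ord0 (lin0 hL).
by rewrite !big_ord_recr /= (linD hL) IH (linZ hL).
Qed.

Lemma lin_polyX_ext (L1 L2 : {poly F} -> W) : linear L1 -> linear L2 ->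
  (forall i, L1 'X^i = L2 'X^i) -> L1 =1 L2.
Proof.
move=> h1 h2 eqX p; rewrite (lin_expand h1) (lin_expand h2).
by apply: eq_bigr => i _; rewrite eqX.
Qed.

End PolyDomain.

End LinearMaps.

Section AskeyWilson.
Variables (F : fieldType) (V : lmodType F) (A B C D : V -> V).
Hypotheses (hA : linear A) (hAB : forall x, comm_op A B x = 2%:R *: D x).

Lemma C_delta_op x : C x = delta_op A B C x - A x - B x.
Proof. by rewrite /delta_op -addrA -opprD [_ + C x]addrC addrK. Qed.

Lemma alpha_opE x :
  2%:R *: alpha_op A B C D x =
  A (A (B x)) - 2%:R *: A (B (A x)) + B (A (A x))
  + 2%:R *: (A (delta_op A B C x) - A (A x) - A (B x) - B (A x)).
Proof.
have twoD y : 2%:R *: D y = A (B y) - B (A y) by rewrite -hAB.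
rewrite /alpha_op /comm_op C_delta_op !scalerDr !scalerN -(linZ hA _ (D x)) !twoD.
rewrite !(linB hA) !scalerBr [RHS]addrA.
congr (_ + _ + _).
by rewrite scaler_nat mulr2n !opprD opprK !addrA.
Qed.

Hypothesis hCA : forall x, comm_op C A x = 2%:R *: D x.

Lemma delta_opA x : delta_op A B C (A x) = A (delta_op A B C x).
Proof.
have AB : A (B x) = B (A x) + 2%:R *: D x by rewrite -hAB /comm_op addrC subrK.
have CA : C (A x) = A (C x) + 2%:R *: D x by rewrite -hCA /comm_op addrC subrK.
by rewrite /delta_op !(linD hA) AB CA !addrA [RHS]addrAC.
Qed.

End AskeyWilson.

Section RaisingStep.
Variables (F : fieldType) (V : lmodType F) (A B : V -> V).
Hypotheses (hA : linear A) (hB : linear B).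
Variables (a b c nu : F) (m : nat) (z x y w : V).

(* In the induction step (z, x, y, w) = (phi_m v_(m-1), v_m, v_(m+1), v_(m+2)).
   theta_pred is theta_(m-1) with m - 1 computed in F: the coefficient identities
   below need it even for m = 0, where nat subtraction would truncate. *)
Let theta_pred := (a + nu / 2%:R - (m%:R - 1)) * (a + nu / 2%:R - (m%:R - 1) + 1).

Hypotheses (hAz : A z = theta_pred *: z + rphi a b c nu m *: x)
  (hAx : A x = rtheta a nu m *: x + y) (hAy : A y = rtheta a nu m.+1 *: y + w)
  (hBx : B x = rtheta b nu m *: x + z)
  (hBy : B y = rtheta b nu m.+1 *: y + rphi a b c nu m.+1 *: x).

(* Identities are checked coefficientwise on the family (z, x, y, w, B w):
   A is known on z, x, y and B on x, y, w. *)
Definition lincomb (c1 c2 c3 c4 c5 : F) :=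
  c1 *: z + c2 *: x + c3 *: y + c4 *: w + c5 *: B w.

Lemma lincombD c1 c2 c3 c4 c5 d1 d2 d3 d4 d5 :
  lincomb c1 c2 c3 c4 c5 + lincomb d1 d2 d3 d4 d5 =
  lincomb (c1 + d1) (c2 + d2) (c3 + d3) (c4 + d4) (c5 + d5).
Proof. by rewrite /lincomb !scalerDl; do 4 (rewrite [LHS]addrACA; congr (_ + _)). Qed.

Lemma lincombZ k c1 c2 c3 c4 c5 :
  k *: lincomb c1 c2 c3 c4 c5 = lincomb (k * c1) (k * c2) (k * c3) (k * c4) (k * c5).
Proof. by rewrite /lincomb !scalerDr !scalerA. Qed.

Lemma lincombN c1 c2 c3 c4 c5 :
  - lincomb c1 c2 c3 c4 c5 = lincomb (- c1) (- c2) (- c3) (- c4) (- c5).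
Proof. by rewrite -scaleN1r lincombZ !mulN1r. Qed.

Lemma lincomb_x : x = lincomb 0 1 0 0 0.
Proof. by rewrite /lincomb scale1r !scale0r !addr0 add0r. Qed.

Lemma lincomb_y : y = lincomb 0 0 1 0 0.
Proof. by rewrite /lincomb scale1r !scale0r !addr0 !add0r. Qed.

Lemma lincomb_w : w = lincomb 0 0 0 1 0.
Proof. by rewrite /lincomb scale1r !scale0r !addr0 !add0r. Qed.

Lemma lincomb_Bw : B w = lincomb 0 0 0 0 1.
Proof. by rewrite /lincomb scale1r !scale0r !add0r. Qed.

Lemma lincomb_z : z = lincomb 1 0 0 0 0.
Proof. by rewrite /lincomb scale1r !scale0r !addr0. Qed.

Lemma lincombA c1 c2 c3 c4 c5 : c4 = 0 -> c5 = 0 ->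
  A (lincomb c1 c2 c3 c4 c5) =
  lincomb (c1 * theta_pred) (c1 * rphi a b c nu m + c2 * rtheta a nu m)
          (c2 + c3 * rtheta a nu m.+1) c3 0.
Proof.
move=> -> ->; rewrite {1}/lincomb !scale0r !addr0 !(linD hA) !(linZ hA) hAz hAx hAy.
rewrite lincomb_z lincomb_x lincomb_y lincomb_w !(lincombZ, lincombD).
by congr lincomb; ring.
Qed.

Lemma lincombB c1 c2 c3 c4 c5 : c1 = 0 -> c5 = 0 ->
  B (lincomb c1 c2 c3 c4 c5) =
  lincomb c2 (c2 * rtheta b nu m + c3 * rphi a b c nu m.+1)
          (c3 * rtheta b nu m.+1) 0 c4.
Proof.
move=> -> ->; rewrite {1}/lincomb !scale0r add0r !addr0 !(linD hB) !(linZ hB) hBx hBy.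
rewrite lincomb_z lincomb_x lincomb_y lincomb_Bw !(lincombZ, lincombD).
by congr lincomb; ring.
Qed.

Lemma B_raise (h2 : 2%:R != 0 :> F)
  (hAW : 2%:R *: (rzeta a b c nu *: x) =
         A (A (B x)) - 2%:R *: A (B (A x)) + B (A (A x))
         + 2%:R *: (A (reta a b c nu *: x) - A (A x) - A (B x) - B (A x))) :
  B w = rtheta b nu m.+2 *: w + rphi a b c nu m.+2 *: y.
Proof.
(* B w occurs in hAW only through B (A (A x)), with coefficient 1. *)
rewrite lincomb_x in hAW.
do ![rewrite lincombD in hAW | rewrite lincombN in hAW | rewrite lincombZ in hAW
    | rewrite lincombA in hAW; [|ring|ring] | rewrite lincombB in hAW; [|ring|ring]].
move/eqP: hAW; rewrite -subr_eq0 lincombN lincombD => /eqP hAW.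
apply/eqP; rewrite -subr_eq0; apply/eqP.
rewrite lincomb_Bw lincomb_w lincomb_y !(lincombZ, lincombN, lincombD) -oppr0 -hAW lincombN.
congr lincomb;
  rewrite /theta_pred /rtheta /rphi /rzeta /reta -?natr1; field; exact: h2.
Qed.

End RaisingStep.

Section ModuleM.
Variables (F : fieldType) (a b c nu : F).

Lemma coef_MA p j :
  (MA a nu p)`_j = rtheta a nu j * p`_j + (if j is k.+1 then p`_k else 0).
Proof.
rewrite coef_poly; case: ltnP => // /[dup] hj /(leq_trans (leqnSn _)) hj'.
by case: j hj hj' => [|j] hj hj' /=; rewrite !nth_default ?mulr0 ?addr0.
Qed.

Lemma coef_MB p j :
  (MB a b c nu p)`_j = rtheta b nu j * p`_j + rphi a b c nu j.+1 * p`_j.+1.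
Proof.
rewrite coef_poly; case: ltnP => // hj.
by rewrite !nth_default ?mulr0 ?addr0 // (leq_trans hj).
Qed.

Lemma linear_MA : linear (MA a nu).
Proof.
move=> k p q; apply/polyP => j.
by rewrite coefD coefZ !coef_MA !coefD !coefZ; case: j => [|j]; rewrite ?coefD ?coefZ; ring.
Qed.

Lemma linear_MB : linear (MB a b c nu).
Proof. by move=> k p q; apply/polyP => j; rewrite coefD coefZ !coef_MB !coefD !coefZ; ring. Qed.

Lemma MA_Xn i : MA a nu 'X^i = rtheta a nu i *: 'X^i + 'X^(i.+1).
Proof.
apply/polyP => j; rewrite coef_MA coefD coefZ !coefXn.
case: j => [|j] /=; first by case: i => [|i]; rewrite ?mulr1 ?mulr0 ?addr0.
by rewrite eqSS coefXn; case: eqP => [->|_]; rewrite ?eqxx ?mulr1 ?mulr0 ?addr0 ?add0r.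
Qed.

Lemma rphi0 : rphi a b c nu 0 = 0.
Proof. by rewrite /rphi !mul0r. Qed.

Lemma MB_Xn i : MB a b c nu 'X^i = rtheta b nu i *: 'X^i + rphi a b c nu i *: 'X^(i.-1).
Proof.
apply/polyP => j; rewrite coef_MB coefD !coefZ !coefXn.
case: i => [|i] /=.
  by rewrite rphi0 mul0r mulr0 !addr0; case: eqP => [->|]; rewrite ?mulr0.
rewrite eqSS; case: (eqVneq j i.+1) => [->|_].
  by rewrite eq_sym (ltn_eqF (ltnSn i)) !mulr0.
by rewrite !mulr0 !add0r; case: (eqVneq j i) => [->|_]; rewrite ?mulr1 ?mulr0.
Qed.

End ModuleM.

Section Extension.
Variables (F : fieldType) (V : lmodType F) (A B C D : V -> V) (a b c nu : F) (v : V).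
Hypotheses (h2 : 2%:R != 0 :> F)
  (hA : linear A) (hB : linear B) (hC : linear C) (hD : linear D)
  (hAB : forall x, comm_op A B x = 2%:R *: D x)
  (hCA : forall x, comm_op C A x = 2%:R *: D x)
  (alpha_opA : forall x, alpha_op A B C D (A x) = A (alpha_op A B C D x)).
Hypotheses (hB0 : B v = rtheta b nu 0 *: v)
  (hBA : B (A v - rtheta a nu 0 *: v) - rtheta b nu 1 *: (A v - rtheta a nu 0 *: v)
         = rphi a b c nu 1 *: v)
  (halpha : alpha_op A B C D v = rzeta a b c nu *: v)
  (hdelta : delta_op A B C v = reta a b c nu *: v).

Fixpoint vseq (i : nat) : V :=
  if i is j.+1 then A (vseq j) - rtheta a nu j *: vseq j else v.

Lemma A_vseq i : A (vseq i) = rtheta a nu i *: vseq i + vseq i.+1.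
Proof. by rewrite /= addrC subrK. Qed.

Lemma vseq_eigen (X : V -> V) k : linear X -> (forall x, X (A x) = A (X x)) ->
  X v = k *: v -> forall i, X (vseq i) = k *: vseq i.
Proof.
move=> hX XA Xv; elim=> [|i IH] //=.
by rewrite (linB hX) (linZ hX) XA IH (linZ hA) scalerBr !scalerA mulrC.
Qed.

Lemma linear_delta_op : linear (delta_op A B C).
Proof. exact: lin_add (lin_add hA hB) hC. Qed.

Lemma linear_alpha_op : linear (alpha_op A B C D).
Proof.
apply: lin_sub (lin_comp hB hA).
exact: lin_add (lin_sub (lin_comp hA hD) (lin_comp hD hA)) (lin_comp hA hC).
Qed.

Lemma delta_vseq : forall i, delta_op A B C (vseq i) = reta a b c nu *: vseq i.
Proof. exact: vseq_eigen linear_delta_op (delta_opA hA hAB hCA) hdelta. Qed.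

Lemma alpha_vseq : forall i, alpha_op A B C D (vseq i) = rzeta a b c nu *: vseq i.
Proof. exact: vseq_eigen linear_alpha_op alpha_opA halpha. Qed.

Lemma B_vseq i :
  B (vseq i) = rtheta b nu i *: vseq i + rphi a b c nu i *: vseq i.-1.
Proof.
suff B_pair : forall m,
    B (vseq m) = rtheta b nu m *: vseq m + rphi a b c nu m *: vseq m.-1 /\
    B (vseq m.+1) = rtheta b nu m.+1 *: vseq m.+1 + rphi a b c nu m.+1 *: vseq m.
  by case: (B_pair i).
elim=> [|m [Bm Bm1]].
  split; first by rewrite /= hB0 rphi0 scale0r addr0.
  by move/eqP: hBA; rewrite subr_eq => /eqP ->; rewrite addrC.
split=> //.
apply: (B_raise hA hB (z := rphi a b c nu m *: vseq m.-1) _ (A_vseq m) (A_vseq m.+1) Bm Bm1 h2).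
- case: m {Bm Bm1} => [|k]; first by rewrite rphi0 !scale0r (lin0 hA) scaler0 addr0.
  rewrite /= -/(vseq k.+1) (linZ hA) A_vseq scalerDr !scalerA -(natr1 (R := F) k) addrK.
  by rewrite [in RHS]mulrC.
- by rewrite -delta_vseq -alpha_vseq; exact: alpha_opE.
Qed.

Definition Mhom (p : {poly F}) : V := \sum_(i < size p) p`_i *: vseq i.

Lemma Mhom_widen n (p : {poly F}) : (size p <= n)%N -> Mhom p = \sum_(i < n) p`_i *: vseq i.
Proof.
elim: n => [|n IH] hp; first by move: hp; rewrite leqn0 /Mhom => /eqP ->.
have [hpn|/(conj hp)/andP] := leqP (size p) n; last by rewrite -eqn_leq => /eqP <-.
by rewrite IH // big_ord_recr /= nth_default // scale0r addr0.
Qed.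

Lemma linear_Mhom : linear Mhom.
Proof.
move=> k p q; set n := maxn (size (k *: p + q)) (maxn (size p) (size q)).
have [hpq hp hq] : [/\ (size (k *: p + q)%R <= n)%N, (size p <= n)%N & (size q <= n)%N].
  by rewrite !leq_max !leqnn !orbT.
rewrite !(Mhom_widen hpq, Mhom_widen hp, Mhom_widen hq) scaler_sumr -big_split.
by apply: eq_bigr => i _; rewrite coefD coefZ scalerDl scalerA.
Qed.

Lemma Mhom_Xn i : Mhom 'X^i = vseq i.
Proof.
rewrite /Mhom size_polyXn big_ord_recr /= coefXn eqxx scale1r big1 ?add0r // => j _.
by rewrite coefXn (ltn_eqF (ltn_ord j)) scale0r.
Qed.

Lemma Mhom_A p : Mhom (MA a nu p) = A (Mhom p).
Proof.
apply: (lin_polyX_ext (L1 := Mhom \o MA a nu) (L2 := A \o Mhom)).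
- exact: lin_comp linear_Mhom (linear_MA a nu).
- exact: lin_comp hA linear_Mhom.
by move=> i /=; rewrite MA_Xn (linD linear_Mhom) (linZ linear_Mhom) !Mhom_Xn A_vseq.
Qed.

Lemma Mhom_B p : Mhom (MB a b c nu p) = B (Mhom p).
Proof.
apply: (lin_polyX_ext (L1 := Mhom \o MB a b c nu) (L2 := B \o Mhom)).
- exact: lin_comp linear_Mhom (linear_MB a b c nu).
- exact: lin_comp hB linear_Mhom.
by move=> i /=; rewrite MB_Xn (linD linear_Mhom) !(linZ linear_Mhom) !Mhom_Xn B_vseq.
Qed.

Lemma delta_Mhom p : delta_op A B C (Mhom p) = reta a b c nu *: Mhom p.
Proof.
apply: (lin_polyX_ext (L1 := delta_op A B C \o Mhom)
                      (L2 := fun p => reta a b c nu *: Mhom p)).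
- exact: lin_comp linear_delta_op linear_Mhom.
- exact: lin_scale linear_Mhom.
by move=> i /=; rewrite Mhom_Xn delta_vseq.
Qed.

Lemma Mhom_C p : Mhom (MC a b c nu p) = C (Mhom p).
Proof.
rewrite /MC !(linB linear_Mhom) (linZ linear_Mhom) Mhom_A Mhom_B -delta_Mhom.
by rewrite [RHS](C_delta_op A B).
Qed.

Lemma Mhom_D p : Mhom (MD a b c nu p) = D (Mhom p).
Proof.
rewrite /MD (linZ linear_Mhom) (linB linear_Mhom) !Mhom_A !Mhom_B !Mhom_A.
by have := hAB (Mhom p); rewrite /comm_op => ->; rewrite scalerA mulVf // scale1r.
Qed.

Lemma racah_hom_Mhom :
  racah_hom (MA a nu) (MB a b c nu) (MC a b c nu) (MD a b c nu) A B C D Mhom.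
Proof. by split; [exact: linear_Mhom|exact: Mhom_A|exact: Mhom_B|exact: Mhom_C|exact: Mhom_D]. Qed.

Lemma Mhom_1 : Mhom 1 = v.
Proof. by rewrite -(expr0 'X) Mhom_Xn. Qed.

Lemma Mhom_unique (g : {poly F} -> V) : linear g ->
  (forall p, g (MA a nu p) = A (g p)) -> g 1 = v -> g =1 Mhom.
Proof.
move=> hg gA g1; apply: (lin_polyX_ext hg linear_Mhom) => i.
rewrite Mhom_Xn; elim: i => [|i IH]; first by rewrite expr0.
have -> : 'X^(i.+1) = MA a nu 'X^i - rtheta a nu i *: 'X^i :> {poly F}.
  by rewrite MA_Xn addrC addKr.
by rewrite (linB hg) (linZ hg) gA IH.
Qed.

End Extension.

Theorem proposition3p7 (F : closedFieldType) (hF : (2%:R : F) != 0)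
  (a b c nu : F) (V : lmodType F) (A B C D : V -> V)
  (hV : racah_module A B C D) (v : V)
  (hB0 : B v = rtheta b nu 0 *: v)
  (hBA : B (A v - rtheta a nu 0 *: v) - rtheta b nu 1 *: (A v - rtheta a nu 0 *: v)
         = rphi a b c nu 1 *: v)
  (halpha : alpha_op A B C D v = rzeta a b c nu *: v)
  (hbeta : beta_op A B C D v = rzetas a b c nu *: v)
  (hdelta : delta_op A B C v = reta a b c nu *: v) :
  exists f : {poly F} -> V,
    [/\ racah_hom (MA a nu) (MB a b c nu) (MC a b c nu) (MD a b c nu) A B C D f,
        f 1 = v &
        forall g : {poly F} -> V,
          racah_hom (MA a nu) (MB a b c nu) (MC a b c nu) (MD a b c nu) A B C D g ->
          g 1 = v -> forall p, g p = f p].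
Proof.
case: hV => [[hA hB hC hD] [hAB _ hCA] [alpha_central _ _]].
have alpha_opA x : alpha_op A B C D (A x) = A (alpha_op A B C D x).
  by case: (alpha_central x).
exists (Mhom A a nu v); split.
- exact: racah_hom_Mhom hF hA hB hC hD hAB hCA alpha_opA hB0 hBA halpha hdelta.
- exact: Mhom_1.
- by move=> g; case=> hg gA _ _ _ g1; exact: Mhom_unique.
Qed.
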